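(* Let $V$ be a $2n$-dimensional complex vector space with a full flag $V_\bullet$, and let $\omega$ be a nondegenerate skew-symmetric bilinear form on $V$. Then there exists a basis $\{e_1,\dots,e_{2n}\}$ of $V$ which is compatible with the flag $V_\bullet$ and hyperbolic with respect to $\omega$.
   Context: A full flag $V_\bullet$ in $V$ is a chain of subspaces $0\subset V_1\subset\dots\subset V_{2n}=V$ with $\dim V_i=i$. A basis of $V$ is compatible with the flag $V_\bullet$ if every $V_i$ is spanned by some subset of the basis. A basis $\{e_1,\dots,e_N\}$ is hyperbolic with respect to a skew-symmetric form $\omega$ if for every $i$ either $\omega(e_i,\cdot)\equiv 0$, or there is exactly one index $j$ with $\omega(e_i,e_j)\neq 0$, and for that $j$ one has $\omega(e_i,e_j)=\pm1$. *)

(* V = 'rV[algC]_(2n) (row vectors), subspaces are row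
   spaces of matrices (mxalgebra), the bilinear form is given by its Gram
   matrix W : omega u v = (u *m W *m v^T) 0 0. *)
From HB Require Import structures.
From mathcomp Require Import all_boot all_order all_algebra all_field.
Set Implicit Arguments. Unset Strict Implicit. Unset Printing Implicit Defensive.
Import GRing.Theory Num.Theory.
Local Open Scope ring_scope.

Definition bform (N : nat) (W : 'M[algC]_N) (u v : 'rV[algC]_N) : algC :=
  (u *m W *m v^T) 0 0.

Definition skew_gram (N : nat) (W : 'M[algC]_N) : Prop := W^T = - W.

Definition nondeg_gram (N : nat) (W : 'M[algC]_N) : Prop := W \in unitmx.

Definition full_flag (N : nat) (Vf : nat -> 'M[algC]_N) : Prop :=
  (forall i, (i <= N)%N -> \rank (Vf i) = i) /\
  (forall i, (i < N)%N -> (Vf i <= Vf i.+1)%MS).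

Definition basis_rows (N : nat) (e : 'I_N -> 'rV[algC]_N) : Prop :=
  row_free (\matrix_(i < N) e i) /\ row_full (\matrix_(i < N) e i).

Definition flag_compatible (N : nat) (Vf : nat -> 'M[algC]_N)
    (e : 'I_N -> 'rV[algC]_N) : Prop :=
  forall i, (i <= N)%N ->
    exists S : {set 'I_N}, (Vf i == \sum_(j in S) <<e j>>)%MS.

Definition hyperbolic_basis (N : nat) (W : 'M[algC]_N)
    (e : 'I_N -> 'rV[algC]_N) : Prop :=
  forall i : 'I_N,
    (forall j, bform W (e i) (e j) = 0) \/
    (exists j : 'I_N,
        (bform W (e i) (e j) = 1 \/ bform W (e i) (e j) = -1) /\
        forall k : 'I_N, k != j -> bform W (e i) (e k) = 0).

From HB Require Import structures.
From mathcomp Require Import all_boot all_order all_algebra all_field zify ring.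

(* For linearly independent f_0, ..., f_(m-1) on whose span the form om is
   nondegenerate, build by induction on m a hyperbolic basis e_0, ..., e_(m-1)
   of that span with each e_i in the span of f_0, ..., f_i; for vectors
   adapted to the flag (f_k in V_(k+1) but not in V_k) this basis is
   compatible with the flag.  Let p be the least index with om (f_0, f_p) <> 0
   and w = f_p / om (f_0, f_p): then f_0, w span a hyperbolic plane and f_0 is
   orthogonal to f_1, ..., f_(p-1).  Projecting the other f_k onto the
   orthogonal of that plane adds the correction term om (f_k, f_0) w only for
   k > p, so it preserves the spans of initial segments modulo the plane, and
   the induction hypothesis applies to the projected sequence. *)

Set Implicit Arguments. Unset Strict Implicit. Unset Printing Implicit Defensive.
Import GRing.Theory Num.Theory.
Local Open Scope ring_scope.

(* [skip2 p] enumerates, in increasing order, the naturals other than [0] and [p]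
   (when [0 < p]); [unskip2 p] is its inverse. *)
Definition skip2 (p k : nat) : nat := bump p k.+1.
Definition unskip2 (p i : nat) : nat := (unbump p i).-1.

Section Skip2.
Local Open Scope nat_scope.
Variable p : nat.

Lemma skip2_neq0 k : skip2 p k != 0.
Proof. by rewrite /skip2 /bump; lia. Qed.

Lemma skip2_neq k : skip2 p k != p.
Proof. by rewrite eq_sym neq_bump. Qed.

Lemma skip2K : cancel (skip2 p) (unskip2 p).
Proof. by move=> k; rewrite /unskip2 /skip2 bumpK. Qed.

Lemma ltn_skip2 : {mono skip2 p : l k / l < k}.
Proof. by move=> l k; rewrite /skip2 /bump; lia. Qed.

Lemma leq_skip2 : {mono skip2 p : l k / l <= k}.
Proof. by move=> l k; rewrite /skip2 /bump; lia. Qed.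

Lemma skip2_lt m k : k < m.-2 -> skip2 p k < m.
Proof. by rewrite /skip2 /bump; lia. Qed.

Hypothesis p_gt0 : 0 < p.

Lemma unskip2K i : i != 0 -> i != p -> skip2 p (unskip2 p i) = i.
Proof. by rewrite /unskip2 /skip2 /unbump /bump; lia. Qed.

Lemma unskip2_lt m i : p < m -> i < m -> i != 0 -> i != p -> unskip2 p i < m.-2.
Proof. by rewrite /unskip2 /unbump; lia. Qed.

Lemma skip2P m i : p < m -> i < m ->
  [\/ i = 0, i = p | exists2 k, k < m.-2 & i = skip2 p k].
Proof.
move=> pm im; have [->|i0] := eqVneq i 0; first by constructor 1.
have [->|ip] := eqVneq i p; first by constructor 2.
by constructor 3; exists (unskip2 p i); rewrite ?unskip2_lt ?unskip2K.
Qed.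

End Skip2.

Section PrefixSpan.
Variable N : nat.

Definition pspan (f : nat -> 'rV[algC]_N) (k : nat) : 'M[algC]_N :=
  (\sum_(i < k) <<f i>>)%MS.

Lemma sub_pspan f k i : (i < k)%N -> (f i <= pspan f k)%MS.
Proof. by move=> ik; rewrite -(genmxE (f i)); apply: (sumsmx_sup (Ordinal ik)). Qed.

Lemma pspan_subP f k m (A : 'M_(m, N)) :
  (forall i, (i < k)%N -> (f i <= A)%MS) -> (pspan f k <= A)%MS.
Proof. by move=> fA; apply/sumsmx_subP => i _; rewrite genmxE fA. Qed.

Lemma pspanS f k r : (k <= r)%N -> (pspan f k <= pspan f r)%MS.
Proof. by move=> kr; apply: pspan_subP => i ik; apply: sub_pspan (leq_trans ik kr). Qed.

Definition prefix_free (m : nat) (f : nat -> 'rV[algC]_N) : Prop :=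
  forall k, (k < m)%N -> ~~ (f k <= pspan f k)%MS.

Lemma rank_pspan_prefix_free m f k : prefix_free m f -> (k <= m)%N ->
  (k <= \rank (pspan f k))%N.
Proof.
move=> free; elim: k => [|k IH] // km; have fk := free k km.
rewrite /pspan big_ord_recr /=; apply: leq_ltn_trans (IH (ltnW km)) (rank_ltmx _).
rewrite ltmxE addsmxSl /=; apply: contra fk => /(submx_trans _); apply.
by rewrite -{1}(genmxE (f k)) addsmxSr.
Qed.

Lemma row_full_pspan f : prefix_free N f -> row_full (pspan f N).
Proof. by move=> free; rewrite /row_full eqn_leq rank_leq_col (rank_pspan_prefix_free free). Qed.

Lemma sum_genmx_ltn (e : nat -> 'rV[algC]_N) i : (i <= N)%N ->
  (\sum_(j in [set j : 'I_N | (j < i)%N]) <<e j>>)%MS = pspan e i.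
Proof.
move=> iN; rewrite /pspan (big_ord_widen _ (fun j => <<e j>>%MS) iN).
by apply: eq_bigl => j; rewrite inE.
Qed.

Lemma basis_rows_pspan (e : nat -> 'rV[algC]_N) : row_full (pspan e N) ->
  basis_rows (fun i : 'I_N => e i).
Proof.
move=> full; have e_sub : (pspan e N <= \matrix_(i < N) e i)%MS.
  apply: pspan_subP => l lN.
  by rewrite -[e l]/((fun i : 'I_N => e i) (Ordinal lN)) -rowK row_sub.
have : row_full (\matrix_(i < N) e i) by rewrite -sub1mx (submx_trans _ e_sub) ?sub1mx.
by rewrite /basis_rows /row_free /row_full => ->.
Qed.

End PrefixSpan.

Section SymplecticForm.
Variables (N : nat) (W : 'M[algC]_N).
Hypothesis skW : skew_gram W.
Local Notation om := (bform W).

Lemma bformDl x y z : om (x + y) z = om x z + om y z.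
Proof. by rewrite /bform !mulmxDl mxE. Qed.

Lemma bformZl a x z : om (a *: x) z = a * om x z.
Proof. by rewrite /bform -!scalemxAl mxE. Qed.

Lemma bformNl x z : om (- x) z = - om x z.
Proof. by rewrite -scaleN1r bformZl mulN1r. Qed.

Lemma bformC x y : om x y = - om y x.
Proof.
rewrite /bform.
have -> : (x *m W *m y^T) 0 0 = ((x *m W *m y^T)^T) 0 0 by rewrite [RHS]mxE.
by rewrite !trmx_mul trmxK skW mulmxA mulmxN mulNmx mxE.
Qed.

Lemma bformxx x : om x x = 0.
Proof.
have : om x x *+ 2 = 0 by rewrite mulr2n {1}bformC addNr.
by move/eqP; rewrite mulrn_eq0 => /eqP.
Qed.

Lemma bformDr x y z : om x (y + z) = om x y + om x z.
Proof. by rewrite bformC bformDl opprD -!bformC. Qed.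

Lemma bformZr a x z : om x (a *: z) = a * om x z.
Proof. by rewrite bformC bformZl -mulrN -bformC. Qed.

Lemma bformBr x y z : om x (y - z) = om x y - om x z.
Proof. by rewrite bformDr -scaleN1r bformZr mulN1r. Qed.

Lemma bform_pspanl0 f k x v : (forall l, (l < k)%N -> om (f l) x = 0) ->
  (v <= pspan f k)%MS -> om v x = 0.
Proof.
move=> fx vf; have : (pspan f k <= kermx (W *m x^T))%MS.
  apply: pspan_subP => l lk; apply/sub_kermxP/rowP => i.
  by rewrite ord1 mulmxA [RHS]mxE -[LHS]/(om (f l) x) fx.
by move=> /(submx_trans vf) /sub_kermxP; rewrite /bform -mulmxA => ->; rewrite mxE.
Qed.

Definition nondeg_span (m : nat) (f : nat -> 'rV[algC]_N) : Prop :=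
  forall v, (v <= pspan f m)%MS -> v != 0 -> exists2 i, (i < m)%N & om v (f i) != 0.

Definition hyperbolic_pairing (m : nat) (f e : nat -> 'rV[algC]_N) (s : nat -> nat) :=
  forall i, (i < m)%N -> [/\ (e i <= pspan f i.+1)%MS, (s i < m)%N,
    om (e i) (e (s i)) = 1 \/ om (e i) (e (s i)) = -1 &
    forall k, (k < m)%N -> k != s i -> om (e i) (e k) = 0].

(* The projection onto the [om]-orthogonal of the hyperbolic plane spanned by
   [x] and [y], when [om x y = 1]. *)
Definition sproj (x y v : 'rV[algC]_N) : 'rV[algC]_N := v - om v y *: x + om v x *: y.

Section HyperbolicPlane.
Variables x y : 'rV[algC]_N.
Hypothesis xy1 : om x y = 1.

Lemma bform_sprojl_x v : om (sproj x y v) x = 0.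
Proof. by rewrite /sproj !(bformDl, bformNl, bformZl) bformxx [om y x]bformC xy1; ring. Qed.

Lemma bform_sprojl_y v : om (sproj x y v) y = 0.
Proof. by rewrite /sproj !(bformDl, bformNl, bformZl) bformxx xy1; ring. Qed.

End HyperbolicPlane.

Lemma bform_sprojr x y u v : om v x = 0 -> om v y = 0 -> om v (sproj x y u) = om v u.
Proof. by move=> vx vy; rewrite /sproj bformDr bformBr !bformZr vx vy !mulr0 subr0 addr0. Qed.

Lemma sub_sproj m (A : 'M_(m, N)) x y v : (x <= A)%MS -> (om v x *: y <= A)%MS ->
  (sproj x y v <= A)%MS = (v <= A)%MS.
Proof.
move=> xA yA; set d := - (om v y *: x) + om v x *: y.
have dA : (d <= A)%MS by rewrite addmx_sub // eqmx_opp scalemx_sub.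
have -> : sproj x y v = v + d by rewrite /sproj addrA.
apply/idP/idP => [vdA|vA]; last exact: addmx_sub.
by rewrite -(addrK d v) addmx_sub // eqmx_opp.
Qed.

Lemma exists_partner m f : (0 < m)%N -> prefix_free m f -> nondeg_span m f ->
  exists p, [/\ (0 < p)%N, (p < m)%N, om (f 0%N) (f p) != 0 &
                forall q, (q < p)%N -> om (f q) (f 0%N) = 0].
Proof.
move=> m_gt0 free nd.
have f0_neq0 : f 0%N != 0.
  by apply: contra (free 0%N m_gt0) => /eqP->; rewrite sub0mx.
have [i im f0i] := nd _ (sub_pspan f m_gt0) f0_neq0.
have ex_p : exists p, (p < m)%N && (om (f 0%N) (f p) != 0) by exists i; rewrite im f0i.
case: (ex_minnP ex_p) => p /andP[pm f0p] p_min; exists p; split => //.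
  by rewrite lt0n; apply: contraNneq f0p => ->; rewrite bformxx.
move=> q qp; have qm := ltn_trans qp pm.
rewrite bformC; apply/eqP; rewrite oppr_eq0; apply: contraTT qp => f0q.
by rewrite -leqNgt p_min // qm f0q.
Qed.

Section Reduction.
Variables (f : nat -> 'rV[algC]_N) (p : nat).
Hypotheses (p_gt0 : (0 < p)%N) (f0p_neq0 : om (f 0%N) (f p) != 0).
Hypothesis orth_before_p : forall q, (q < p)%N -> om (f q) (f 0%N) = 0.

Definition partner_vec : 'rV[algC]_N := (om (f 0%N) (f p))^-1 *: f p.
Local Notation w := partner_vec.

Lemma bform_f0_partner : om (f 0%N) w = 1.
Proof. by rewrite bformZr mulVf. Qed.

Lemma partner_vecK : f p = om (f 0%N) (f p) *: w.
Proof. by rewrite scalerA mulfV // scale1r. Qed.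

Lemma partner_sub_pspan r : (p < r)%N -> (w <= pspan f r)%MS.
Proof. by move=> pr; apply/scalemx_sub/sub_pspan. Qed.

Definition reduce (k : nat) : 'rV[algC]_N := sproj (f 0%N) w (f (skip2 p k)).

Lemma sproj_sub_pspan q r : q != 0%N -> q != p -> (q <= r)%N ->
  (sproj (f 0%N) w (f q) <= pspan f r)%MS = (f q <= pspan f r)%MS.
Proof.
move=> q0 qp qr; apply: sub_sproj; first by apply: sub_pspan; rewrite (leq_trans _ qr) // lt0n.
have [q_lt_p|p_lt_q] := ltnP q p; first by rewrite orth_before_p // scale0r sub0mx.
apply/scalemx_sub/partner_sub_pspan; apply: leq_trans qr.
by rewrite ltn_neqAle eq_sym qp.
Qed.

Lemma pspan_reduce k r : (forall l, (l < k)%N -> (skip2 p l < r)%N) ->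
  (pspan reduce k <= pspan f r)%MS.
Proof.
move=> skip_lt; apply: pspan_subP => l lk.
by rewrite sproj_sub_pspan ?skip2_neq0 ?skip2_neq ?sub_pspan ?skip_lt // ltnW ?skip_lt.
Qed.

Lemma bform_pspan_reduce k v : (v <= pspan reduce k)%MS -> om v (f 0%N) = 0 /\ om v w = 0.
Proof.
by move=> vr; split; apply: bform_pspanl0 vr => l _;
  [apply: bform_sprojl_x | apply: bform_sprojl_y]; apply: bform_f0_partner.
Qed.

Lemma prefix_free_reduce m : prefix_free m f -> prefix_free m.-2 reduce.
Proof.
move=> free k km; apply: contra (free _ (skip2_lt p km)) => red_k.
rewrite -sproj_sub_pspan ?skip2_neq0 ?skip2_neq //.
by apply: submx_trans red_k (pspan_reduce _) => l lk; rewrite ltn_skip2.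
Qed.

Lemma nondeg_span_reduce m : (p < m)%N -> nondeg_span m f -> nondeg_span m.-2 reduce.
Proof.
move=> pm nd v vr v_neq0.
have [v0 vw] := bform_pspan_reduce vr.
have [i im vi] := nd v (submx_trans vr (pspan_reduce (@skip2_lt p m))) v_neq0.
have i0 : i != 0%N by apply: contraNneq vi => ->; rewrite v0.
have ip : i != p by apply: contraNneq vi => ->; rewrite partner_vecK bformZr vw mulr0.
exists (unskip2 p i); first exact: unskip2_lt.
by rewrite /reduce unskip2K // bform_sprojr.
Qed.

Definition extend_basis (e : nat -> 'rV[algC]_N) (i : nat) : 'rV[algC]_N :=
  if i == 0%N then f 0%N else if i == p then w else e (unskip2 p i).

Definition extend_partner (s : nat -> nat) (i : nat) : nat :=
  if i == 0%N then p else if i == p then 0%N else skip2 p (s (unskip2 p i)).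

Lemma extend_basisp e : extend_basis e p = w.
Proof. by rewrite /extend_basis gtn_eqF // eqxx. Qed.

Lemma extend_basis_skip2 e k : extend_basis e (skip2 p k) = e k.
Proof. by rewrite /extend_basis (negbTE (skip2_neq0 _ _)) (negbTE (skip2_neq _ _)) skip2K. Qed.

Lemma extend_partner_skip2 s k : extend_partner s (skip2 p k) = skip2 p (s k).
Proof. by rewrite /extend_partner (negbTE (skip2_neq0 _ _)) (negbTE (skip2_neq _ _)) skip2K. Qed.

Lemma hyperbolic_pairing_extend m e s : (p < m)%N ->
  hyperbolic_pairing m.-2 reduce e s ->
  hyperbolic_pairing m f (extend_basis e) (extend_partner s).
Proof.
move=> pm pair.
have e_orth l : (l < m.-2)%N -> om (e l) (f 0%N) = 0 /\ om (e l) w = 0.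
  move=> lm; case: (pair l lm) => el _ _ _.
  exact/bform_pspan_reduce/(submx_trans el)/pspanS.
have p0 : (p == 0%N) = false by rewrite gtn_eqF.
move=> i im; case: (skip2P p_gt0 pm im) => [->|->|[k km ->]].
- rewrite /extend_partner eqxx /= extend_basisp; split => //.
  + exact: (sub_pspan f (ltn0Sn 0)).
  + by left; apply: bform_f0_partner.
  move=> j jm jp; case: (skip2P p_gt0 pm jm) => [->|jE|[l lm ->]].
  + by rewrite bformxx.
  + by rewrite jE eqxx in jp.
  + by rewrite extend_basis_skip2 bformC (e_orth l lm).1 oppr0.
- rewrite /extend_partner eqxx p0 /= extend_basisp; split => //.
  + exact: partner_sub_pspan.
  + exact: leq_ltn_trans (leq0n p) pm.
  + by right; rewrite bformC bform_f0_partner.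
  move=> j jm j0; case: (skip2P p_gt0 pm jm) => [jE|->|[l lm ->]].
  + by rewrite jE eqxx in j0.
  + by rewrite extend_basisp bformxx.
  + by rewrite extend_basis_skip2 bformC (e_orth l lm).2 oppr0.
case: (pair k km) => ek sk ek_sk e_orth_k.
rewrite extend_partner_skip2 !extend_basis_skip2; split => //.
- by apply: submx_trans ek (pspan_reduce _) => l; rewrite !ltnS leq_skip2.
- exact: skip2_lt.
move=> j jm; case: (skip2P p_gt0 pm jm) => [->|->|[l lm ->]] js.
- by rewrite (e_orth k km).1.
- by rewrite extend_basisp (e_orth k km).2.
- by rewrite extend_basis_skip2 e_orth_k //; apply: contraNneq js => ->.
Qed.

End Reduction.

Lemma exists_hyperbolic_pairing m f : prefix_free m f -> nondeg_span m f ->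
  exists e s, hyperbolic_pairing m f e s.
Proof.
elim/ltn_ind: m f => m IH f free nd.
have [->|m_gt0] := posnP m; first by exists f, id.
have [p [p_gt0 pm f0p orth]] := exists_partner m_gt0 free nd.
have [|e [s pair]] := IH m.-2 _ (reduce f p) (prefix_free_reduce orth free)
  (nondeg_span_reduce p_gt0 f0p orth pm nd); first by rewrite -subn2; lia.
exists (extend_basis f p e), (extend_partner p s).
exact: (hyperbolic_pairing_extend p_gt0 f0p orth pm pair).
Qed.

Section PairingBasis.
Variables (m : nat) (f e : nat -> 'rV[algC]_N) (s : nat -> nat).
Hypothesis pair : hyperbolic_pairing m f e s.

Lemma hyperbolic_pairingK i : (i < m)%N -> s (s i) = i.
Proof.
move=> im; case: (pair im) => _ sim e_si _; case: (pair sim) => _ _ _ e_ssi.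
have : om (e (s i)) (e i) != 0.
  by rewrite bformC oppr_eq0; case: e_si => ->; rewrite ?oppr_eq0 oner_eq0.
by apply: contraNeq => ssi; rewrite e_ssi // eq_sym.
Qed.

Lemma prefix_free_hyperbolic_pairing : prefix_free m e.
Proof.
move=> k km; case: (pair km) => _ skm e_sk _; apply/negP => ek.
suff : om (e k) (e (s k)) = 0 by case: e_sk => -> /eqP; rewrite ?oppr_eq0 oner_eq0.
apply: bform_pspanl0 ek => l lk; have lm := ltn_trans lk km.
case: (pair lm) => _ _ _ -> //.
apply: contraTneq lk => /(congr1 s); rewrite !hyperbolic_pairingK // => ->.
by rewrite ltnn.
Qed.

End PairingBasis.

Lemma hyperbolic_basis_pairing f e s : hyperbolic_pairing N f e s ->
  hyperbolic_basis W (fun i : 'I_N => e i).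
Proof.
move=> pair i; right; case: (pair i (ltn_ord i)) => _ siN e_si e_orth.
exists (Ordinal siN); split => // k k_si; exact: e_orth.
Qed.

Lemma nondeg_span_row_full f : nondeg_gram W -> row_full (pspan f N) -> nondeg_span N f.
Proof.
move=> Wunit full v _ v_neq0.
have [/existsP[i vi]|] := boolP [exists i : 'I_N, om v (f i) != 0]; first by exists i.
rewrite negb_exists => /forallP orth.
have vx x : om v x = 0.
  rewrite bformC (bform_pspanl0 (k := N) (f := f)) ?oppr0 ?(submx_full x full) // => l lN.
  by move/negPn/eqP: (orth (Ordinal lN)); rewrite bformC => /eqP; rewrite oppr_eq0 => /eqP.
have vW : v *m W = 0.
  by apply/rowP => j; have := vx (delta_mx 0 j); rewrite /bform trmx_delta -colE !mxE.
by move: v_neq0; rewrite -(mulmxK Wunit v) vW mul0mx eqxx.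
Qed.

End SymplecticForm.

Section Flag.
Variables (N : nat) (Vf : nat -> 'M[algC]_N).
Hypothesis flag : full_flag Vf.

Lemma full_flag_mono l k : (l <= k)%N -> (k <= N)%N -> (Vf l <= Vf k)%MS.
Proof.
case: flag => _ step; elim: k => [|k IH] lk kN; first by move: lk; rewrite leqn0 => /eqP->.
move: lk; rewrite leq_eqVlt ltnS => /orP[/eqP->//|lk].
exact: submx_trans (IH lk (ltnW kN)) (step k kN).
Qed.

Definition flag_adapted (f : nat -> 'rV[algC]_N) : Prop :=
  forall k, (k < N)%N -> (f k <= Vf k.+1)%MS && ~~ (f k <= Vf k)%MS.

Lemma exists_flag_adapted : exists f, flag_adapted f.
Proof.
case: flag => rk _.
have exP k : exists x : 'rV_N, (k < N)%N ==> (x <= Vf k.+1)%MS && ~~ (x <= Vf k)%MS.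
  have [kN|] := ltnP k N; last by exists 0.
  have : ~~ (Vf k.+1 <= Vf k)%MS by apply/negP => /mxrankS; rewrite !rk ?ltnn // ltnW.
  by case/row_subPn => r nr; exists (row r (Vf k.+1)); rewrite row_sub.
by exists (fun k => xchoose (exP k)) => k; apply/implyP/(xchooseP (exP k)).
Qed.

Variable f : nat -> 'rV[algC]_N.
Hypothesis f_adapted : flag_adapted f.

Lemma pspan_flag_adapted k : (k <= N)%N -> (pspan f k <= Vf k)%MS.
Proof.
move=> kN; apply: pspan_subP => l lk; have /andP[fl _] := f_adapted (leq_trans lk kN).
exact: submx_trans fl (full_flag_mono lk kN).
Qed.

Lemma prefix_free_flag_adapted : prefix_free N f.
Proof.
move=> k kN; have /andP[_] := f_adapted kN; apply: contra => /submx_trans; apply.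
exact: pspan_flag_adapted (ltnW kN).
Qed.

Lemma pspan_hyperbolic_pairing_flag W e s : skew_gram W ->
  hyperbolic_pairing W N f e s -> forall i, (i <= N)%N -> (Vf i == pspan e i)%MS.
Proof.
move=> skW pair i iN; have le_eV : (pspan e i <= Vf i)%MS.
  apply: pspan_subP => l li; case: (pair l (leq_trans li iN)) => el _ _ _.
  exact: submx_trans el (submx_trans (pspan_flag_adapted (leq_trans li iN))
    (full_flag_mono li iN)).
rewrite le_eV andbT; have [_ <-] := mxrank_leqif_sup le_eV.
rewrite eqn_leq mxrankS //= flag.1 //.
exact: rank_pspan_prefix_free (prefix_free_hyperbolic_pairing skW pair) iN.
Qed.

End Flag.

Theorem lemma2 (n : nat) (Vf : nat -> 'M[algC]_(2 * n)) (W : 'M[algC]_(2 * n)) :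
  full_flag Vf -> skew_gram W -> nondeg_gram W ->
  exists e : 'I_(2 * n) -> 'rV[algC]_(2 * n),
    basis_rows e /\ flag_compatible Vf e /\ hyperbolic_basis W e.
Proof.
move=> flag skW Wunit.
have [f f_adapted] := exists_flag_adapted flag.
have f_free := prefix_free_flag_adapted flag f_adapted.
have [e [s pair]] := exists_hyperbolic_pairing skW f_free
  (nondeg_span_row_full skW Wunit (row_full_pspan f_free)).
exists (fun i => e i); split; [|split].
- exact/basis_rows_pspan/row_full_pspan/(prefix_free_hyperbolic_pairing skW pair).
- move=> i iN; exists [set j : 'I_(2 * n) | (j < i)%N].
  by rewrite sum_genmx_ltn // (pspan_hyperbolic_pairing_flag flag f_adapted skW pair).
- exact: hyperbolic_basis_pairing pair.
Qed.
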